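(* Let $X$ be a real Banach space, $\tau$ the norm or weak topology, and suppose $X$ is $\tau$-ALUR. Then for every $N\in\mathbb{N}$ and every strictly convex monotone norm $\gamma:\mathbb{R}^N\to[0,\infty)$, the space $\ell_\gamma^N(X)$ is $\tau$-ALUR.
   Context: A norm $\gamma$ on $\mathbb{R}^N$ is monotone if $0\le a\le b$ coordinatewise implies $\gamma(a)\le\gamma(b)$. $\ell_\gamma^N(X)$ is $X^N$ with norm $|||(x_1,\dots,x_N)|||=\gamma(\|x_1\|,\dots,\|x_N\|)$, with $\tau$ on it being the corresponding norm or weak topology. A Banach space $Z$ is $\tau$-almost locally uniformly rotund ($\tau$-ALUR) if whenever $x,x_n\in S_Z$ and $h_m\in S_{Z^*}$ satisfy $\lim_m\lim_n h_m(\frac{x_n+x}{2})=1$, we have $x_n\to x$ in $\tau$. *)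

From HB Require Import structures.
From mathcomp Require Import all_boot all_order all_algebra.
From mathcomp Require Import all_classical all_reals.
From mathcomp Require Import topology normedtype sequences.
Set Implicit Arguments. Unset Strict Implicit. Unset Printing Implicit Defensive.
Import Order.TTheory GRing.Theory Num.Theory.
Import numFieldNormedType.Exports.
Local Open Scope ring_scope.
Local Open Scope classical_set_scope.

Inductive topkind := NormTop | WeakTop.

Section Generic.
Variables (R : realType) (V : lmodType R) (nrm : V -> R).

Definition is_lin (h : V -> R) : Prop :=
  forall (a : R) (u v : V), h (a *: u + v) = a * h u + h v.

Definition in_dual (h : V -> R) : Prop :=
  is_lin h /\ exists c : R, forall v, `|h v| <= c * nrm v.

(* h belongs to the unit sphere S_{V^*}: operator norm (least bounding
   constant) equal to 1 *)
Definition in_dual_sphere (h : V -> R) : Prop :=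
  [/\ is_lin h, (forall v, `|h v| <= nrm v) &
      (forall c : R, (forall v, `|h v| <= c * nrm v) -> 1 <= c)].

Definition tau_cvg (t : topkind) (u : nat -> V) (x : V) : Prop :=
  match t with
  | NormTop => (fun n => nrm (u n - x)) @ \oo --> (0 : R)
  | WeakTop => forall h, in_dual h -> (fun n => h (u n)) @ \oo --> h x
  end.

Definition ALUR (t : topkind) : Prop :=
  forall (x : V) (xn : nat -> V) (hm : nat -> V -> R),
    nrm x = 1 -> (forall n, nrm (xn n) = 1) ->
    (forall m, in_dual_sphere (hm m)) ->
    (exists L : nat -> R,
        (forall m, (fun n => hm m (2^-1 *: (xn n + x))) @ \oo --> L m) /\
        L @ \oo --> (1 : R)) ->
    tau_cvg t xn x.
End Generic.

Section Gamma.
Variables (R : realType) (N : nat) (gamma : 'rV[R]_N -> R).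

Definition is_norm_on : Prop :=
  [/\ forall v, 0 <= gamma v,
      forall v, gamma v = 0 -> v = 0,
      forall (a : R) v, gamma (a *: v) = `|a| * gamma v &
      forall u v, gamma (u + v) <= gamma u + gamma v].

Definition monotone_norm : Prop :=
  forall a b : 'rV[R]_N, (forall i, 0 <= a ord0 i <= b ord0 i) ->
    gamma a <= gamma b.

Definition strictly_convex_norm : Prop :=
  forall u v : 'rV[R]_N, gamma u = 1 -> gamma v = 1 -> u != v ->
    gamma (2^-1 *: (u + v)) < 1.
End Gamma.

Definition lgamma_norm (R : realType) (X : normedModType R) (N : nat)
  (gamma : 'rV[R]_N -> R) (x : {ffun 'I_N -> X}) : R :=
  gamma (\row_i `|x i|).

From HB Require Import structures.
From mathcomp Require Import all_boot all_order all_algebra.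
From mathcomp Require Import all_classical all_reals.
From mathcomp Require Import topology normedtype sequences.
From mathcomp Require Import ring lra.
Import Order.TTheory GRing.Theory Num.Theory.
Import numFieldNormedType.Exports.
Local Open Scope ring_scope.
Local Open Scope classical_set_scope.

(* It suffices that every subsequence of (x_n) has a further subsequence
   tau-converging to x, so by a diagonal argument we may assume that |x_n^j| and
   f_jm(x_n^j) converge for all j and m, where f_jm = h_m (single j _) is the j-th
   coordinate functional of h_m.  Strict convexity of gamma forces
   lim_n |x_n^j| = |x^j|.  If lam_jm is the limit of f_jm ((x_n^j + x^j) / 2), then
   L_m = sum_j lam_jm, lam_jm <= |f_jm| |x^j| and sum_j |f_jm| |x^j| <= 1, so each
   gap |f_jm| |x^j| - lam_jm is at most 1 - L_m -> 0.  Strict convexity again keeps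
   |f_im| away from 0 when x^i <> 0, so the normalised functionals f_im / |f_im|
   witness the ALUR property of X for x_n^i / |x_n^i| and x^i / |x^i|; coordinatewise
   tau-convergence then gives tau-convergence in l_gamma^N(X). *)

Lemma increasing_seq_comp (f g : nat -> nat) :
  increasing_seq f -> increasing_seq g -> increasing_seq (f \o g).
Proof. by move=> hf hg m n /=; rewrite hf -leEnat hg. Qed.

Lemma increasing_seq_geq (f : nat -> nat) : increasing_seq f -> forall n, (n <= f n)%N.
Proof.
move=> hf; elim=> // n IH; apply: leq_ltn_trans IH _.
by rewrite ltnNge -leEnat hf ltnn.
Qed.

Lemma cvg_geq_id (r : nat -> nat) : (forall n, (n <= r n)%N) -> r @ \oo --> \oo.
Proof.
move=> hr A [N _ NA]; exists N => // n /= Nn.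
exact/NA/(leq_trans Nn (hr n)).
Qed.

Lemma cvg_subseq (T : topologicalType) (u : nat -> T) (l : T) (f : nat -> nat) :
  increasing_seq f -> u @ \oo --> l -> u \o f @ \oo --> l.
Proof. by move=> /increasing_seq_geq/cvg_geq_id; apply: cvg_comp. Qed.

Lemma cvg_subseqP (T : topologicalType) (u : nat -> T) (l : T) :
  (forall f, increasing_seq f ->
     exists2 g, increasing_seq g & u \o f \o g @ \oo --> l) ->
  u @ \oo --> l.
Proof.
move=> subcvg; apply: contrapT => /existsNP[A /not_implyP[lA notA]].
have far N : exists n, (N <= n)%N /\ ~ A (u n).
  apply: contrapT => noFar; apply: notA; exists N => // n /= Nn.
  by apply: contrapT => nAn; apply: noFar; exists n.
have [c cP] := choice far.
pose f := fix f n := c (if n is n'.+1 then (f n').+1 else 0%N).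
have incr_f : increasing_seq f.
  by apply/increasing_seqP => n; rewrite ltEnat /=; have [] := cP (f n).+1.
have f_out n : ~ A (u (f n)).
  by case: n => [|n]; [have [] := cP 0%N | have [] := cP (f n).+1].
have [g _ /(_ A lA) [N _ NA]] := subcvg f incr_f.
exact: f_out (g N) (NA N (leqnn N)).
Qed.

Section diagonal_extraction.
Variable R : realType.

Lemma bounded_subseq (u : nat -> R) (B : R) : (forall n, `|u n| <= B) ->
  exists2 f, increasing_seq f & cvgn (u \o f).
Proof.
move=> uB; apply: bolzano_weierstrass; exists B; split; first exact: num_real.
by move=> M BM n _; apply: le_trans (uB n) (ltW BM).
Qed.

Variables (u : nat -> nat -> R) (B : nat -> R).
Hypothesis uB : forall k n, `|u k n| <= B k.

Let refine_subseq (p : (nat -> nat) * nat) :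
  exists r, increasing_seq r /\ cvgn (u p.2 \o p.1 \o r).
Proof.
have [r incr_r cvg_r] := @bounded_subseq (u p.2 \o p.1) (B p.2) (fun n => uB _ _).
by exists r.
Qed.

Let S := projT1 (choice refine_subseq).
Let SP : forall p, increasing_seq (S p) /\ cvgn (u p.2 \o p.1 \o S p).
Proof. exact: projT2 (choice refine_subseq). Qed.

(* psi k.+1 refines psi k so that u k.+1 converges along it; from index k on,
   the diagonal n |-> psi n n runs through a subsequence of psi k. *)
Let psi := fix psi k := if k is k'.+1 then psi k' \o S (psi k', k) else S (id, 0%N).

Let psi_incr k : increasing_seq (psi k).
Proof.
elim: k => [|k IH]; first by have [] := SP (id, 0%N).
by apply: increasing_seq_comp IH _; have [] := SP (psi k, k.+1).
Qed.

Let psi_cvg k : cvgn (u k \o psi k).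
Proof. by case: k => [|k]; [have [] := SP (id, 0%N) | have [] := SP (psi k, k.+1)]. Qed.

Let psi_factor k d : exists r, increasing_seq r /\ psi (d + k) =1 psi k \o r.
Proof.
elim: d => [|d [r [incr_r psiE]]]; first by exists id.
exists (r \o S (psi (d + k), (d + k).+1)); split.
  by apply: increasing_seq_comp incr_r _; have [] := SP (psi (d + k), (d + k).+1).
by move=> n; rewrite addSn /= psiE.
Qed.

Lemma diagonal_subseq : exists2 d, increasing_seq d & forall k, cvgn (u k \o d).
Proof.
exists (fun n => psi n n).
  apply/increasing_seqP => n /=.
  rewrite (leW_mono (psi_incr n)) ltEnat.
  by have [incr_S _] := SP (psi n, n.+1); apply: increasing_seq_geq.
move=> k.
have psi_tail n : exists m, (n <= m)%N /\ ((k <= n)%N -> psi n n = psi k m).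
  have [kn|nk] := leqP k n; last by exists n; split=> // kn; rewrite ltnNge kn in nk.
  have [r [incr_r psiE]] := psi_factor k (n - k); exists (r n).
  by rewrite subnK // in psiE; split=> [|_]; [apply: increasing_seq_geq | apply: psiE].
have [rho rhoP] := choice psi_tail.
have /cvg_ex[l ukl] := psi_cvg k.
have ukl_rho := cvg_comp _ _ (@cvg_geq_id rho (fun n => proj1 (rhoP n))) ukl.
apply/cvg_ex; exists l; apply: cvg_trans ukl_rho; apply: near_eq_cvg.
by near=> n => /=; rewrite (proj2 (rhoP n)) //; near: n; exact: nbhs_infty_ge.
Unshelve. all: by end_near. Qed.

End diagonal_extraction.

Lemma countable_diagonal_subseq (R : realType) (T : countType)
    (u : T -> nat -> R) (B : T -> R) :
  (forall t n, `|u t n| <= B t) ->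
  exists2 d, increasing_seq d & forall t, cvgn (u t \o d).
Proof.
move=> uB.
pose v k := if pickle_inv k is Some t then u t else fun=> 0 : R.
pose C k := if pickle_inv k is Some t then B t else 0 : R.
have vC k n : `|v k n| <= C k by rewrite /v /C; case: pickle_inv => [t|]; rewrite ?normr0.
have [d incr_d cvg_vd] := @diagonal_subseq R v C vC.
by exists d => // t; have := cvg_vd (pickle t); rewrite /v pickleK_inv.
Qed.

Lemma cvg_dist_le {R : realType} {u w : nat -> R} {l : R} :
  (forall n, `|u n - l| <= w n) -> w @ \oo --> 0 -> u @ \oo --> l.
Proof.
move=> uw w0; apply/subr_cvg0/norm_cvg0P.
by apply: (squeeze_cvgr _ (cvg_cst 0) w0); near=> n; rewrite normr_ge0 uw.
Unshelve. all: by end_near. Qed.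

Section is_lin_theory.
Context {R : realType} {V : lmodType R} {h : V -> R}.
Hypothesis hl : is_lin h.

Let hL : {linear V -> R^o} := HB.pack h (GRing.isLinear.Build R V R^o *%R h hl).

Lemma is_lin0 : h 0 = 0. Proof. exact: linear0 hL. Qed.
Lemma is_linD u v : h (u + v) = h u + h v. Proof. exact: (linearD hL u v). Qed.
Lemma is_linZ a v : h (a *: v) = a * h v. Proof. exact: (linearZ_LR hL a v). Qed.
Lemma is_linN v : h (- v) = - h v. Proof. exact: (linearN hL v). Qed.
Lemma is_linB u v : h (u - v) = h u - h v. Proof. exact: (linearB hL u v). Qed.
Lemma is_lin_sum (I : Type) (r : seq I) (F : I -> V) :
  h (\sum_(i <- r) F i) = \sum_(i <- r) h (F i).
Proof. exact: (linear_sum hL r predT F). Qed.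
End is_lin_theory.

Section operator_norm.
Context {R : realType} {X : normedModType R}.

Definition opnorm (f : X -> R) : R := sup [set `|f v| | v in [set v : X | `|v| <= 1]].

Context {f : X -> R} {c : R}.
Hypotheses (f_lin : is_lin f) (f_bounded : forall v, `|f v| <= c * `|v|).

Let opnorm_has_sup : has_sup [set `|f v| | v in [set v : X | `|v| <= 1]].
Proof.
split; first by exists `|f 0|; exists 0; rewrite /= ?normr0.
exists `|c| => _ [v /= v1 <-]; apply: le_trans (f_bounded v) _.
by apply: le_trans (ler_norm _) _; rewrite normrM normr_id ler_piMr.
Qed.

Lemma opnorm_ge0 : 0 <= opnorm f.
Proof.
apply: le_trans (normr_ge0 (f 0)) (sup_upper_bound opnorm_has_sup _).
by exists 0; rewrite /= ?normr0.
Qed.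

Lemma ler_opnorm v : `|f v| <= opnorm f * `|v|.
Proof.
have [->|v0] := eqVneq v 0; first by rewrite (is_lin0 f_lin) !normr0 mulr0.
have nv0 : 0 < `|v| by rewrite normr_gt0.
have : `|f (`|v|^-1 *: v)| <= opnorm f.
  apply: sup_upper_bound opnorm_has_sup _ _; exists (`|v|^-1 *: v) => //=.
  by rewrite normrZ normfV normr_id mulVf ?gt_eqF.
by rewrite (is_linZ f_lin) normrM normfV normr_id mulrC ler_pdivrMr.
Qed.

Lemma opnorm_approx e : 0 < e -> exists2 v : X, `|v| <= 1 & opnorm f - e < f v.
Proof.
move=> e0; have [_ [v /= v1 <-] fv] := sup_adherent e0 opnorm_has_sup.
have [fv0|fv0] := leP 0 (f v); first by exists v; rewrite // -(ger0_norm fv0).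
exists (- v); first by rewrite normrN.
by rewrite (is_linN f_lin) -(ltr0_norm fv0).
Qed.

Lemma opnorm_le c' : 0 <= c' -> (forall v, `|f v| <= c' * `|v|) -> opnorm f <= c'.
Proof.
move=> c'0 fc'; apply: ge_sup; first by exists `|f 0|; exists 0; rewrite /= ?normr0.
by move=> _ [v /= v1 <-]; apply: le_trans (fc' v) _; rewrite ler_piMr.
Qed.

Lemma in_dual_sphere_div_opnorm :
  0 < opnorm f -> in_dual_sphere Num.norm (fun v => f v / opnorm f).
Proof.
move=> f0; split.
- by move=> a u v; rewrite f_lin mulrDl mulrA.
- by move=> v; rewrite normrM normfV (gtr0_norm f0) ler_pdivrMr // mulrC ler_opnorm.
move=> c' fc'.
have [v _] := @opnorm_approx (opnorm f) f0; rewrite subrr => fv_gt0.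
have c'v_gt0 : 0 < c' * `|v|.
  by apply: lt_le_trans (fc' v); rewrite normr_gt0 mulf_neq0 ?invr_eq0 ?gt_eqF.
have c'_ge0 : 0 <= c' by have := normr_ge0 v; nra.
have : opnorm f <= c' * opnorm f.
  apply: opnorm_le => [|u]; first exact: mulr_ge0 c'_ge0 (ltW f0).
  by have := fc' u; rewrite normrM normfV (gtr0_norm f0) ler_pdivrMr // mulrAC.
by rewrite ler_pMl.
Qed.

End operator_norm.

Section tau_convergence.
Variable R : realType.

Lemma tau_cvg_subseqP (V : lmodType R) (nrm : V -> R) t (u : nat -> V) (x : V) :
  (forall f, increasing_seq f ->
     exists2 g, increasing_seq g & tau_cvg nrm t (u \o f \o g) x) ->
  tau_cvg nrm t u x.
Proof.
case: t => /= subcvg.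
  by apply: cvg_subseqP => f /subcvg[g incr_g cvg_g]; exists g.
move=> h hd; apply: cvg_subseqP => f /subcvg[g incr_g cvg_g].
by exists g => //; apply: cvg_g.
Qed.

Variable X : normedModType R.

Lemma tau_cvg_normP (u : nat -> X) (x : X) :
  tau_cvg Num.norm NormTop u x <-> u @ \oo --> x.
Proof. by split=> [/norm_cvg0P/subr_cvg0 | /subr_cvg0/norm_cvg0P]. Qed.

Lemma tau_cvg_norm t (u : nat -> X) (x : X) :
  u @ \oo --> x -> tau_cvg Num.norm t u x.
Proof.
case: t => [/tau_cvg_normP //|ux h [hl [c hc]]] /=.
have ux0 : (fun n => `|u n - x|) @ \oo --> (0 : R) by apply/tau_cvg_normP.
have cux : (fun n => c * `|u n - x|) @ \oo --> (0 : R).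
  by rewrite -(mulr0 c); exact: cvgMl_tmp.
by apply: (cvg_dist_le _ cux) => n /=; rewrite -(is_linB hl) hc.
Qed.

Lemma tau_cvgZ t (a : nat -> R) (a0 : R) (u : nat -> X) (y : X) :
  a @ \oo --> a0 -> tau_cvg Num.norm t u y ->
  tau_cvg Num.norm t (fun n => a n *: u n) (a0 *: y).
Proof.
case: t => a_cvg uy.
  by apply/tau_cvg_normP; apply: cvgZ a_cvg _; apply/tau_cvg_normP.
move=> h [hl hb]; rewrite /= (is_linZ hl).
under eq_fun do rewrite (is_linZ hl).
exact: cvgM a_cvg (uy h (conj hl hb)).
Qed.

End tau_convergence.

Section ALUR_rescaled.
Context {R : realType} {X : normedModType R} {t : topkind}.
Hypothesis X_ALUR : ALUR (fun v : X => `|v|) t.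

Lemma ALUR_rescaled (x : X) (xn : nat -> X) (g : nat -> X -> R) (l : nat -> R) :
  0 < `|x| -> (fun n => `|xn n|) @ \oo --> `|x| ->
  (forall m, in_dual_sphere Num.norm (g m)) ->
  (forall m, (fun n => g m (xn n)) @ \oo --> l m) ->
  (fun m => (l m + g m x) / (2 * `|x|)) @ \oo --> (1 : R) ->
  tau_cvg Num.norm t xn x.
Proof.
move=> x_gt0 xn_cvg g_sphere g_cvg l_cvg.
pose y := `|x|^-1 *: x.
(* y is a junk value for the finitely many n with xn n = 0. *)
pose yn n := if xn n == 0 then y else `|xn n|^-1 *: xn n.
have y_unit : `|y| = 1 by rewrite normrZ normfV normr_id mulVf ?gt_eqF.
have yn_unit n : `|yn n| = 1.
  by rewrite /yn; case: eqP => // /eqP xn0; rewrite normrZ normfV normr_id mulVf ?normr_eq0.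
have mid_cvg m :
    (fun n => g m (2^-1 *: (yn n + y))) @ \oo --> (l m + g m x) / (2 * `|x|).
  have [gl _ _] := g_sphere m.
  have -> : (l m + g m x) / (2 * `|x|) = 2^-1 * (`|x|^-1 * l m + `|x|^-1 * g m x).
    by field; rewrite gt_eqF.
  apply: cvg_trans (cvgMl_tmp (cvgD (cvgM (cvgV _ xn_cvg) (g_cvg m)) (cvg_cst _))).
    apply: near_eq_cvg; near=> n.
    have xn_neq0 : xn n != 0 by rewrite -normr_gt0; near: n; exact: cvgr_gt xn_cvg _ x_gt0.
    by rewrite /yn (negbTE xn_neq0) (is_linZ gl) (is_linD gl) !(is_linZ gl).
  by rewrite gt_eqF.
have yn_cvg : tau_cvg Num.norm t yn y.
  by apply: X_ALUR y_unit yn_unit g_sphere _; exists (fun m => (l m + g m x) / (2 * `|x|)).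
have -> : xn = fun n => `|xn n| *: yn n.
  apply/funext => n; rewrite /yn; case: eqP => [->|/eqP xn0]; first by rewrite normr0 scale0r.
  by rewrite scalerA divff ?scale1r ?normr_eq0.
have -> : x = `|x| *: y by rewrite scalerA divff ?scale1r ?gt_eqF.
exact: tau_cvgZ xn_cvg yn_cvg.
Unshelve. all: by end_near. Qed.

End ALUR_rescaled.

Section gamma_norm.
Context {R : realType} {N : nat} {gamma : 'rV[R]_N -> R}.
Hypothesis gamma_norm : is_norm_on gamma.

Lemma gamma_ge0 v : 0 <= gamma v.
Proof. by case: gamma_norm. Qed.

Lemma gamma_eq0 v : gamma v = 0 -> v = 0.
Proof. by case: gamma_norm => _ + _ _; apply. Qed.

Lemma gammaZ a v : gamma (a *: v) = `|a| * gamma v.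
Proof. by case: gamma_norm. Qed.

Lemma ler_gammaD u v : gamma (u + v) <= gamma u + gamma v.
Proof. by case: gamma_norm. Qed.

Lemma gammaN v : gamma (- v) = gamma v.
Proof. by rewrite -scaleN1r gammaZ normrN normr1 mul1r. Qed.

Lemma ler_gamma_sum (I : Type) (r : seq I) (F : I -> 'rV[R]_N) :
  gamma (\sum_(i <- r) F i) <= \sum_(i <- r) gamma (F i).
Proof.
elim: r => [|i r IH]; first by rewrite !big_nil -(scale0r 0) gammaZ normr0 mul0r.
by rewrite !big_cons; apply: le_trans (ler_gammaD _ _) _; rewrite lerD2l.
Qed.

Lemma gamma_le_sum_coord u : gamma u <= \sum_j `|u ord0 j| * gamma (delta_mx 0 j).
Proof.
rewrite {1}(row_sum_delta u); apply: le_trans (ler_gamma_sum _ _ _) _.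
by apply: ler_sum => j _; rewrite gammaZ.
Qed.

Lemma ler_dist_gamma u v : `|gamma u - gamma v| <= gamma (u - v).
Proof.
have := ler_gammaD (u - v) v; have := ler_gammaD (v - u) u.
by rewrite !subrK -opprB gammaN ler_distl => ? ?; apply/andP; split; lra.
Qed.

Lemma gamma_cvg (un : nat -> 'rV[R]_N) (u : 'rV[R]_N) :
  (forall j, (fun n => un n ord0 j) @ \oo --> u ord0 j) ->
  (fun n => gamma (un n)) @ \oo --> gamma u.
Proof.
move=> un_cvg.
pose w n := \sum_j `|un n ord0 j - u ord0 j| * gamma (delta_mx 0 j).
apply: (@cvg_dist_le _ _ w).
  move=> n; apply: le_trans (ler_dist_gamma _ _) (le_trans (gamma_le_sum_coord _) _).
  by apply: ler_sum => j _; rewrite !mxE.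
have -> : 0 = \sum_j 0 * gamma (delta_mx 0 j) :> R by rewrite big1 // => j _; rewrite mul0r.
apply: cvg_big => // [|j _]; first exact: add_continuous.
by apply: cvgMr_tmp; apply/norm_cvg0P/subr_cvg0.
Qed.

Lemma gamma_delta_gt0 j : 0 < gamma (delta_mx 0 j).
Proof.
rewrite lt_def gamma_ge0 andbT; apply/eqP => /gamma_eq0 /matrixP /(_ ord0 j).
by rewrite !mxE !eqxx => /eqP; rewrite oner_eq0.
Qed.

Lemma gamma_midpoint_lt1 : strictly_convex_norm gamma ->
  forall u v, gamma u <= 1 -> gamma v = 1 -> u != v -> gamma (2^-1 *: (u + v)) < 1.
Proof.
move=> strict u v; rewrite le_eqVlt => /orP[/eqP|gu_lt1 gv1 _]; first exact: strict.
rewrite gammaZ ger0_norm ?invr_ge0 ?ler0n //.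
by have := ler_gammaD u v; rewrite gv1; lra.
Qed.

End gamma_norm.

Section lgamma_space.
Context {R : realType} {N : nat} {gamma : 'rV[R]_N -> R} {X : normedModType R}.
Hypotheses (gamma_norm : is_norm_on gamma) (gamma_mono : monotone_norm gamma).
Local Notation V := {ffun 'I_N -> X}.
Local Notation lg := (lgamma_norm gamma).

Definition single (j : 'I_N) (v : X) : V := [ffun k => if k == j then v else 0].

Lemma ffun_sum_single (z : V) : z = \sum_j single j (z j).
Proof.
apply/ffunP => k; rewrite sum_ffunE (bigD1 k) //= ffunE eqxx big1 ?addr0 // => i ik.
by rewrite ffunE eq_sym (negbTE ik).
Qed.

Lemma single_lin j a u v : single j (a *: u + v) = a *: single j u + single j v.
Proof. by apply/ffunP => k; rewrite !ffunE; case: eqP; rewrite ?scaler0 ?addr0. Qed.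

Lemma lgamma_ge0 (z : V) : 0 <= lg z.
Proof. exact: gamma_ge0. Qed.

Lemma lgamma_single j v : lg (single j v) = `|v| * gamma (delta_mx 0 j).
Proof.
rewrite /lgamma_norm -(ger0_norm (normr_ge0 v)) -(gammaZ gamma_norm); congr gamma.
by apply/rowP => k; rewrite !mxE ffunE eq_sym; case: eqP; rewrite ?normr0 ?mulr0 ?mulr1.
Qed.

Lemma lgamma_coord_le (z : V) j : `|z j| * gamma (delta_mx 0 j) <= lg z.
Proof.
rewrite -(ger0_norm (normr_ge0 (z j))) -(gammaZ gamma_norm); apply: gamma_mono => k.
by rewrite !mxE; case: (eqVneq k j) => [->|_]; rewrite ?mulr1 ?mulr0 ?lexx ?normr_ge0.
Qed.

Lemma norm_single_le (h : V -> R) (c : R) j v : (forall z, `|h z| <= c * lg z) ->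
  `|h (single j v)| <= c * gamma (delta_mx 0 j) * `|v|.
Proof. by move=> hc; rewrite -mulrA [_ * `|v|]mulrC -lgamma_single. Qed.

Lemma dual_single_le (h : V -> R) j v : (forall z, `|h z| <= lg z) ->
  `|h (single j v)| <= gamma (delta_mx 0 j) * `|v|.
Proof.
by move=> h_le; rewrite -[gamma _]mul1r; apply: norm_single_le => z; rewrite mul1r.
Qed.

Lemma dual_single_coord_le (h : V -> R) (z : V) j : (forall z, `|h z| <= lg z) ->
  `|h (single j (z j))| <= lg z.
Proof. by move/dual_single_le/le_trans; apply; rewrite mulrC lgamma_coord_le. Qed.

Lemma norm_coord_le (z : V) j : `|z j| <= lg z / gamma (delta_mx 0 j).
Proof. by rewrite ler_pdivlMr ?gamma_delta_gt0 ?lgamma_coord_le. Qed.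

Lemma lgamma_tau_cvg t (xn : nat -> V) (x : V) :
  (forall j, tau_cvg Num.norm t (fun n => xn n j) (x j)) -> tau_cvg lg t xn x.
Proof.
case: t => /= coord_cvg.
  pose w n := \sum_j `|xn n j - x j| * gamma (delta_mx 0 j).
  apply: (@cvg_dist_le _ _ w).
    move=> n; rewrite subr0 ger0_norm ?lgamma_ge0 //.
    apply: le_trans (gamma_le_sum_coord gamma_norm _) _.
    by apply: ler_sum => j _; rewrite !mxE normr_id !ffunE.
  have -> : 0 = \sum_j 0 * gamma (delta_mx 0 j) :> R by rewrite big1 // => j _; rewrite mul0r.
  apply: cvg_big => // [|j _]; first exact: add_continuous.
  exact: cvgMr_tmp (coord_cvg j).
move=> h [h_lin [c hc]].
have h_single j : in_dual Num.norm (fun v => h (single j v)).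
  split; first by move=> a u v; rewrite single_lin h_lin.
  by exists (c * gamma (delta_mx 0 j)) => v; apply: norm_single_le.
rewrite [x]ffun_sum_single (is_lin_sum h_lin).
under eq_fun do rewrite [xn _]ffun_sum_single (is_lin_sum h_lin).
apply: cvg_big => // [|j _]; first exact: add_continuous.
exact: coord_cvg (h_single j).
Qed.

Lemma sum_opnorm_single_le (h : V -> R) : is_lin h -> (forall z, `|h z| <= lg z) ->
  forall c : 'rV[R]_N, (forall j, 0 <= c ord0 j) ->
  \sum_j opnorm (fun v => h (single j v)) * c ord0 j <= gamma c.
Proof.
move=> h_lin h_le c c_ge0.
pose f j v := h (single j v).
have f_lin j : is_lin (f j) by move=> a u v; rewrite /f single_lin h_lin.
have f_bounded j v : `|f j v| <= gamma (delta_mx 0 j) * `|v| by exact: dual_single_le.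
have sum_le e : 0 < e -> \sum_j (opnorm (f j) - e) * c ord0 j <= gamma c.
  move=> e_gt0.
  have almost_attained j : exists v, `|v| <= 1 /\ opnorm (f j) - e < f j v.
    by have [v] := opnorm_approx (f_lin j) (f_bounded j) _ e_gt0; exists v.
  have [v vP] := choice almost_attained.
  pose z : V := [ffun k => c ord0 k *: v k].
  have hz : h z = \sum_j c ord0 j * f j (v j).
    rewrite [z]ffun_sum_single (is_lin_sum h_lin); apply: eq_bigr => j _.
    by rewrite ffunE -(is_linZ (f_lin j)).
  apply: (@le_trans _ _ (h z)).
    by rewrite hz; apply: ler_sum => j _; rewrite mulrC ler_wpM2l // ltW //; case: (vP j).
  apply: le_trans (ler_norm _) (le_trans (h_le z) _); apply: gamma_mono => k.
  rewrite !mxE ffunE normr_ge0 normrZ ger0_norm //=.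
  by rewrite ler_piMr //; case: (vP k).
apply/ler_addgt0Pr => e e_gt0.
set S := \sum_j c ord0 j.
have S_ge0 : 0 <= S by apply: sumr_ge0.
have e'_gt0 : 0 < e / (S + 1) by rewrite divr_gt0 // ltr_wpDl.
have e'S_le : e / (S + 1) * S <= e.
  by rewrite mulrAC ler_pdivrMr ?ltr_wpDl // ler_pM2l //; lra.
have := sum_le _ e'_gt0; under eq_bigr do rewrite mulrBl.
by rewrite sumrB -mulr_sumr -/S; lra.
Qed.

End lgamma_space.

Section lgamma_ALUR.
Context {R : realType} {X : normedModType R} {N : nat} {gamma : 'rV[R]_N -> R}.
Hypotheses (gamma_norm : is_norm_on gamma) (gamma_mono : monotone_norm gamma)
  (gamma_strict : strictly_convex_norm gamma).
Local Notation V := {ffun 'I_N -> X}.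
Local Notation lg := (lgamma_norm gamma).

Variables (x : V) (xn : nat -> V) (h : nat -> V -> R) (L : nat -> R).
Hypotheses (x_unit : lg x = 1) (xn_unit : forall n, lg (xn n) = 1)
  (h_sphere : forall m, in_dual_sphere lg (h m))
  (h_mid_cvg : forall m, (fun n => h m (2^-1 *: (xn n + x))) @ \oo --> L m)
  (L_cvg : L @ \oo --> (1 : R)).

Variables (b : 'I_N -> R) (l : 'I_N -> nat -> R).
Hypotheses (b_cvg : forall j, (fun n => `|xn n j|) @ \oo --> b j)
  (l_cvg : forall j m, (fun n => h m (single j (xn n j))) @ \oo --> l j m).

Let f j m v := h m (single j v).
Let op j m := opnorm (f j m).
Let lam j m := 2^-1 * (l j m + f j m (x j)).

Let h_lin m : is_lin (h m). Proof. by case: (h_sphere m). Qed.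

Let h_le m z : `|h m z| <= lg z. Proof. by case: (h_sphere m). Qed.

Let f_lin j m : is_lin (f j m).
Proof. by move=> a u v; rewrite /f single_lin h_lin. Qed.

Let f_bounded j m v : `|f j m v| <= gamma (delta_mx 0 j) * `|v|.
Proof. exact: (dual_single_le gamma_norm). Qed.

Let f_mid j m n : f j m ((2^-1 *: (xn n + x)) j) = 2^-1 * (f j m (xn n j) + f j m (x j)).
Proof. by rewrite !ffunE (is_linZ (f_lin j m)) (is_linD (f_lin j m)). Qed.

Let f_mid_cvg j m : (fun n => f j m ((2^-1 *: (xn n + x)) j)) @ \oo --> lam j m.
Proof.
under eq_fun do rewrite f_mid.
exact: cvgMl_tmp (cvgD (l_cvg j m) (cvg_cst _)).
Qed.

Let nrow (z : V) : 'rV[R]_N := \row_j `|z j|.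

Lemma lim_norm_coord j : b j = `|x j|.
Proof.
have b_unit : gamma (\row_k b k) = 1.
  have : (fun n => gamma (nrow (xn n))) @ \oo --> gamma (\row_k b k).
    apply: (gamma_cvg gamma_norm) => k; rewrite mxE.
    by under eq_fun do rewrite /nrow mxE; exact: b_cvg.
  have -> : (fun n => gamma (nrow (xn n))) = fun=> 1 by apply/funext => n; exact: xn_unit.
  by move/(cvg_lim (@Rhausdorff R)); rewrite lim_cst.
have mid_ge1 : 1 <= gamma (2^-1 *: (\row_k b k + nrow x)).
  apply: (ler_cvg_to L_cvg (cvg_cst _)); apply: nearW => m.
  have mid_cvg : (fun n => gamma (2^-1 *: (nrow (xn n) + nrow x)))
      @ \oo --> gamma (2^-1 *: (\row_k b k + nrow x)).
    apply: (gamma_cvg gamma_norm) => k; under eq_fun do rewrite /nrow !mxE.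
    by rewrite !mxE; apply: cvgMl_tmp; apply: cvgD (b_cvg k) (cvg_cst _).
  apply: (ler_cvg_to (h_mid_cvg m) mid_cvg); apply: nearW => n.
  apply: le_trans (ler_norm _) (le_trans (h_le m _) _); apply: gamma_mono => k.
  rewrite !mxE !ffunE normr_ge0 normrZ ger0_norm ?invr_ge0 ?ler0n //=.
  by rewrite ler_wpM2l ?invr_ge0 ?ler0n ?ler_normD.
have : \row_k b k = nrow x.
  have [//|b_neq_x] := eqVneq (\row_k b k) (nrow x).
  have := gamma_midpoint_lt1 gamma_norm gamma_strict _ _ _ x_unit b_neq_x.
  by rewrite b_unit lexx ltNge mid_ge1 => /(_ isT).
by move/matrixP/(_ ord0 j); rewrite !mxE.
Qed.

Let h_decomp m (z : V) : h m z = \sum_j f j m (z j).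
Proof. by rewrite {1}[z]ffun_sum_single (is_lin_sum (h_lin m)). Qed.

Lemma L_sum m : L m = \sum_j lam j m.
Proof.
have : (fun n => h m (2^-1 *: (xn n + x))) @ \oo --> \sum_j lam j m.
  under eq_fun do rewrite h_decomp.
  by apply: cvg_big => [|j _]; [exact: add_continuous | exact: f_mid_cvg].
by move/(cvg_lim (@Rhausdorff R)) <-; rewrite (cvg_lim (@Rhausdorff R) (h_mid_cvg m)).
Qed.

Lemma lam_le j m : lam j m <= op j m * `|x j|.
Proof.
have op_mid_cvg : (fun n => op j m * (2^-1 * (`|xn n j| + `|x j|)))
    @ \oo --> op j m * (2^-1 * (`|x j| + `|x j|)).
  rewrite -{2}(lim_norm_coord j); apply: cvgMl_tmp; apply: cvgMl_tmp.
  exact: cvgD (b_cvg j) (cvg_cst _).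
have -> : op j m * `|x j| = op j m * (2^-1 * (`|x j| + `|x j|)) by congr (_ * _); lra.
apply: (ler_cvg_to (f_mid_cvg j m) op_mid_cvg); apply: nearW => n.
apply: le_trans (ler_norm _) (le_trans (ler_opnorm (f_lin j m) (f_bounded j m) _) _).
rewrite ler_wpM2l ?(opnorm_ge0 (f_bounded j m)) // !ffunE normrZ ger0_norm ?invr_ge0 ?ler0n //.
by rewrite ler_wpM2l ?invr_ge0 ?ler0n ?ler_normD.
Qed.

Lemma sum_op_le m (c : 'rV[R]_N) : (forall j, 0 <= c ord0 j) ->
  \sum_j op j m * c ord0 j <= gamma c.
Proof. exact: sum_opnorm_single_le gamma_norm gamma_mono _ (h_lin m) (h_le m) c. Qed.

Lemma coord_gap i m : op i m * `|x i| - lam i m <= 1 - L m.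
Proof.
have x_ge0 j : 0 <= nrow x ord0 j by rewrite mxE.
have := sum_op_le m _ x_ge0; under eq_bigr do rewrite mxE; rewrite [gamma _]x_unit L_sum.
move=> sum_le; apply: le_trans (lerB sum_le (lexx _)).
rewrite -sumrB (bigD1 i) //= lerDl.
by apply: sumr_ge0 => j _; rewrite subr_ge0 lam_le.
Qed.

(* Zeroing the i-th entry of |x| gives c <> |x| with gamma c <= 1, so the midpoint
   mid has gamma mid < 1; testing the coordinate norms of h m against mid yields
   op i m * |x i| >= 2 * (L m - gamma mid). *)
Lemma op_coord_lower i : 0 < `|x i| ->
  exists2 d, 0 < d & \forall m \near \oo, d <= op i m * `|x i|.
Proof.
move=> xi_gt0.
pose c : 'rV[R]_N := \row_j (if j == i then 0 else `|x j|).
pose mid := 2^-1 *: (c + nrow x).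
have c_le1 : gamma c <= 1.
  rewrite -x_unit; apply: gamma_mono => j; rewrite !mxE.
  by case: eqP; rewrite ?lexx ?normr_ge0.
have c_neq_x : c != nrow x.
  apply/negP => /eqP/matrixP/(_ ord0 i); rewrite !mxE eqxx => xi0.
  by move: xi_gt0; rewrite -xi0 ltxx.
have mid_lt1 := gamma_midpoint_lt1 gamma_norm gamma_strict _ _ c_le1 x_unit c_neq_x.
have mid_ge0 j : 0 <= mid ord0 j.
  rewrite !mxE mulr_ge0 ?invr_ge0 ?ler0n ?addr_ge0 //.
  by case: eqP; rewrite ?lexx ?normr_ge0.
have mid_sum m : \sum_j op j m * mid ord0 j =
    \sum_j op j m * `|x j| - 2^-1 * (op i m * `|x i|).
  rewrite (bigD1 i) //= [in RHS](bigD1 i) //= !mxE eqxx.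
  rewrite (eq_bigr (fun j => op j m * `|x j|)) => [|j /negbTE ji]; last first.
    by rewrite !mxE ji; congr (_ * _); lra.
  by rewrite add0r mulrCA; lra.
exists ((1 - gamma mid) / 2); first by rewrite divr_gt0 // subr_gt0.
have : \forall m \near \oo, 1 - (1 - gamma mid) / 2 <= L m.
  by apply: (cvgr_ge _ L_cvg); lra.
apply: filterS => m L_ge.
have := sum_op_le m _ mid_ge0; rewrite mid_sum.
have : L m <= \sum_j op j m * `|x j| by rewrite L_sum; apply: ler_sum => j _; exact: lam_le.
lra.
Qed.

Lemma rescaled_mid_cvg1 i M d : 0 < `|x i| -> 0 < d ->
    (forall m, d <= op i (m + M) * `|x i|) ->
  (fun m => (l i (m + M) / op i (m + M) + f i (m + M) (x i) / op i (m + M))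
    / (2 * `|x i|)) @ \oo --> (1 : R).
Proof.
move=> xi_gt0 d_gt0 opM_ge.
have L_shift : (fun m => 1 - L (m + M)) @ \oo --> (0 : R).
  by rewrite -(subrr 1); apply: cvgB (cvg_cst _) (cvg_comp _ _ (cvg_addnr M) L_cvg).
have w_cvg : (fun m => (1 - L (m + M)) / d) @ \oo --> (0 : R).
  by rewrite -(mul0r d^-1); exact: cvgMr_tmp.
apply: (cvg_dist_le _ w_cvg) => m /=.
have := coord_gap i (m + M); have := lam_le i (m + M); have := opM_ge m.
rewrite /lam; set A := op i (m + M) * `|x i|; set lm := 2^-1 * _.
move=> d_le lm_le gap_le; have A_gt0 : 0 < A := lt_le_trans d_gt0 d_le.
have op_neq0 : op i (m + M) != 0.
  by apply: contraTneq A_gt0 => op0; rewrite /A op0 mul0r ltxx.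
have -> : (l i (m + M) / op i (m + M) + f i (m + M) (x i) / op i (m + M))
    / (2 * `|x i|) - 1 = - ((A - lm) / A).
  by rewrite /A /lm; field; rewrite op_neq0 gt_eqF.
rewrite normrN ger0_norm ?divr_ge0 ?subr_ge0 ?(ltW A_gt0) //.
rewrite ler_pdivrMr // mulrAC ler_pdivlMr //.
have : 0 <= A - lm by rewrite subr_ge0.
nra.
Qed.

Lemma coord_tau_cvg t : ALUR (fun v : X => `|v|) t ->
  forall i, tau_cvg Num.norm t (fun n => xn n i) (x i).
Proof.
move=> X_ALUR i; have xi_cvg := b_cvg i; rewrite lim_norm_coord in xi_cvg.
have [xi_gt0|] := ltP 0 `|x i|; last first.
  rewrite normr_le0 => /eqP xi0; apply: tau_cvg_norm; rewrite xi0.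
  by apply/norm_cvg0P; rewrite xi0 normr0 in xi_cvg.
have [d d_gt0 [M _ op_ge]] := op_coord_lower i xi_gt0.
have opM_ge m : d <= op i (m + M) * `|x i| by apply: op_ge; rewrite /= leq_addl.
have opM_gt0 m : 0 < op i (m + M).
  by rewrite -(pmulr_lgt0 _ xi_gt0); apply: lt_le_trans d_gt0 (opM_ge m).
apply: (ALUR_rescaled X_ALUR _ _ (fun m v => f i (m + M) v / op i (m + M))
  (fun m => l i (m + M) / op i (m + M)) xi_gt0 xi_cvg).
- by move=> m; exact: in_dual_sphere_div_opnorm (f_lin i _) (f_bounded i _) (opM_gt0 m).
- by move=> m; apply: cvgMr_tmp; exact: l_cvg.
exact: rescaled_mid_cvg1 xi_gt0 d_gt0 opM_ge.
Qed.

Lemma lgamma_tau_cvg_of_limits t : ALUR (fun v : X => `|v|) t -> tau_cvg lg t xn x.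
Proof. by move=> X_ALUR; apply: (lgamma_tau_cvg gamma_norm) => i; exact: coord_tau_cvg. Qed.

End lgamma_ALUR.

Theorem theorem3p5 (R : realType) (X : completeNormedModType R) (t : topkind) :
  ALUR (fun x : X => `|x|) t ->
  forall (N : nat) (gamma : 'rV[R]_N -> R),
    is_norm_on gamma -> monotone_norm gamma -> strictly_convex_norm gamma ->
    ALUR (@lgamma_norm R X N gamma) t.
Proof.
move=> X_ALUR N gamma gamma_norm gamma_mono gamma_strict x xn h x_unit xn_unit
  h_sphere [L [h_mid_cvg L_cvg]].
apply: tau_cvg_subseqP => f incr_f.
pose u (p : 'I_N * option nat) n := if p.2 is Some m
  then h m (single p.1 (xn (f n) p.1)) else `|xn (f n) p.1|.
have [g incr_g u_cvg] : exists2 g, increasing_seq g & forall p, cvgn (u p \o g).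
  apply: (@countable_diagonal_subseq _ _ u
    (fun p => if p.2 is Some _ then 1 else 1 / gamma (delta_mx 0 p.1))).
  move=> [j [m|]] n /=; rewrite -(xn_unit (f n)) ?normr_id.
    by apply: (dual_single_coord_le gamma_norm gamma_mono); case: (h_sphere m).
  exact: (norm_coord_le gamma_norm gamma_mono).
exists g => //.
apply: (lgamma_tau_cvg_of_limits gamma_norm gamma_mono gamma_strict _ _ _ _ x_unit
  (fun n => xn_unit (f (g n))) h_sphere _ L_cvg
  (fun j => lim (u (j, None) \o g @ \oo)) (fun j m => lim (u (j, Some m) \o g @ \oo)))
  => // [m|j|j m].
- by apply: cvg_subseq (h_mid_cvg m); exact: increasing_seq_comp.
- exact: (u_cvg (j, None)).
- exact: (u_cvg (j, Some m)).
Qed.
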